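(* Let $t\ge 2$ and let $G$ be a graph of order $n$ with vertex degrees $d_1,\ldots,d_n$. Let $\overline{q}_1,\ldots,\overline{q}_n$ be the eigenvalues of the signless Laplacian of the complement $\overline{G}$. Then the eigenvalues of the signless Laplacian of $\overline{G^{(t)}}$ (the complement of the blowup $G^{(t)}$) are, as a multiset, $t\overline{q}_1+2(t-1),\ldots,t\overline{q}_n+2(t-1)$ together with $tn-td_1-2,\ldots,tn-td_n-2$, where each of $tn-td_1-2,\ldots,tn-td_n-2$ is taken with multiplicity $t-1$.
   Context: Graphs are finite and simple; $\overline{H}$ denotes the complement of a graph $H$. The signless Laplacian of a graph with adjacency matrix $A$ and diagonal degree matrix $D$ is $Q=D+A$. For an integer $t\ge1$, the blowup $G^{(t)}$ is obtained from $G$ by replacing each vertex $u$ by a set $V_u$ of $t$ pairwise nonadjacent vertices and each edge $\{u,v\}$ of $G$ by the complete bipartite graph between $V_u$ and $V_v$ (and no other edges). *)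

From HB Require Import structures.
From mathcomp Require Import all_boot all_order all_algebra.
Set Implicit Arguments. Unset Strict Implicit. Unset Printing Implicit Defensive.
Import Order.TTheory GRing.Theory Num.Theory.
Local Open Scope ring_scope.

Definition simple_graph (V : finType) (e : rel V) : Prop :=
  symmetric e /\ irreflexive e.

Definition deg (V : finType) (e : rel V) (x : V) : nat := #|[set y | e x y]|.

Definition compl_graph (V : finType) (e : rel V) : rel V :=
  fun x y => (x != y) && ~~ e x y.

(* blowup G^(t): vertex u replaced by V_u = {u} x 'I_t (independent set),
   (u,a) ~ (v,b) iff u ~ v in G. *)
Definition blowup (V : finType) (e : rel V) (t : nat) : rel (V * 'I_t)%type :=
  fun x y => e x.1 y.1.

Definition signless_laplacian (R : numDomainType) (V : finType) (e : rel V)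
  : 'M[R]_#|V| :=
  \matrix_(i, j)
    ((if i == j then (deg e (enum_val i))%:R else 0)
     + (e (enum_val i) (enum_val j))%:R).

Definition eigenvalues_multiset (R : comNzRingType) (m : nat)
  (A : 'M[R]_m) (s : seq R) : Prop :=
  char_poly A = \prod_(x <- s) ('X - x%:P).

(* In the complement of G^(t) every fibre V_u is a clique, two fibres are
   completely joined exactly when u and v are non-adjacent in G, and every
   vertex of V_u has degree t(n - d_u) - 1.  Hence the signless Laplacian Q
   satisfies Q_(x,y) = [x = y] (tn - t d_u - 2) + 1 - [uv in G] for x in V_u,
   y in V_v.  Change basis by replacing, in every fibre, the first unit vector
   by the indicator of the fibre.  Since the row sums of Q over a fibre do not
   depend on the chosen vertex of the source fibre, the new matrix is block
   upper triangular: on the fibre indicators it acts as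
   t Q(complement of G) + 2(t - 1), and on the remaining t - 1 vectors of each
   fibre V_u it is diagonal with entry tn - t d_u - 2. *)

From mathcomp Require Import all_boot all_order all_algebra fingroup perm ring.
Set Implicit Arguments.
Unset Strict Implicit.
Unset Printing Implicit Defensive.
Import GRing.Theory Num.Theory.
Local Open Scope ring_scope.

Lemma sumr_delta_l (R : nzRingType) (T : finType) (x : T) (F : T -> R) :
  \sum_z (z == x)%:R * F z = F x.
Proof.
rewrite (bigD1 x) //= eqxx mul1r big1 ?addr0 // => z /negbTE ->.
by rewrite mul0r.
Qed.

Lemma sumr_delta_r (R : nzRingType) (T : finType) (x : T) (F : T -> R) :
  \sum_z F z * (z == x)%:R = F x.
Proof.
rewrite (bigD1 x) //= eqxx mulr1 big1 ?addr0 // => z /negbTE ->.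
by rewrite mulr0.
Qed.

Lemma sumr_neq (R : nzRingType) (T : finType) (x : T) :
  \sum_y (x != y)%:R = #|T|%:R - 1 :> R.
Proof.
rewrite -[#|T|]sum1_card natr_sum (bigD1 x) //= [in RHS](bigD1 x) //=.
rewrite eqxx add0r addrC addrK.
by apply: eq_bigr => y; rewrite eq_sym => ->.
Qed.

Section CharPoly.
Variable R : comNzRingType.

Lemma char_poly_conj n (P A Q : 'M[R]_n) :
  P *m Q = 1%:M -> char_poly (P *m A *m Q) = char_poly A.
Proof.
move=> PQ; rewrite /char_poly.
have -> : char_poly_mx (P *m A *m Q)
    = map_mx polyC P *m char_poly_mx A *m map_mx polyC Q.
  rewrite /char_poly_mx mulmxBr mulmxBl -!map_mxM; congr (_ - _).
  by rewrite mul_mx_scalar -scalemxAl -map_mxM PQ map_mx1 scalemx1.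
by rewrite !det_mulmx mulrAC -det_mulmx -map_mxM PQ map_mx1 det1 mul1r.
Qed.

Lemma char_poly_reindex m n (A : 'M[R]_m) (B : 'M[R]_n) (f : 'I_n -> 'I_m) :
  injective f -> m = n -> (forall i j, B i j = A (f i) (f j)) ->
  char_poly B = char_poly A.
Proof.
move=> finj emn; subst m => BE.
pose s : 'S_n := perm finj.
have -> : B = perm_mx s *m A *m perm_mx s^-1.
  by apply/matrixP => i j; rewrite -row_permE -col_permE !mxE BE !permE.
by apply: char_poly_conj; rewrite -perm_mxM mulgV perm_mx1.
Qed.

Lemma char_poly_ublock m n (A : 'M[R]_m) B (D : 'M[R]_n) :
  char_poly (block_mx A B 0 D) = char_poly A * char_poly D.
Proof.
rewrite /char_poly /char_poly_mx map_block_mx (scalar_mx_block m n) raddf0.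
by rewrite opp_block_mx add_block_mx oppr0 addr0 det_ublock.
Qed.

Definition fun_mx (I : finType) (a : I -> I -> R) : 'M[R]_#|I| :=
  \matrix_(i, j) a (enum_val i) (enum_val j).

Lemma fun_mxM (I : finType) (a b : I -> I -> R) :
  fun_mx (fun x y => \sum_z a x z * b z y) = fun_mx a *m fun_mx b.
Proof.
apply/matrixP => i j; rewrite !mxE.
under [RHS]eq_bigr do rewrite !mxE.
by rewrite [LHS]big_enum_val.
Qed.

Lemma fun_mx1 (I : finType) : fun_mx (fun x y : I => (x == y)%:R) = 1%:M.
Proof. by apply/matrixP => i j; rewrite !mxE (inj_eq enum_val_inj). Qed.

Lemma char_poly_fun_mx_conj (I : finType) (A P P' : I -> I -> R) :
  (forall x y, \sum_z P' x z * P z y = (x == y)%:R) ->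
  char_poly (fun_mx (fun x y => \sum_z P' x z * \sum_w A z w * P w y))
  = char_poly (fun_mx A).
Proof.
move=> P'P; rewrite !fun_mxM mulmxA; apply: char_poly_conj.
by rewrite -fun_mxM -fun_mx1; apply/matrixP => i j; rewrite !mxE P'P.
Qed.

Lemma char_poly_fun_mx_bij (I J : finType) (a : I -> I -> R) (g : J -> I) :
  bijective g ->
  char_poly (fun_mx (fun x y => a (g x) (g y))) = char_poly (fun_mx a).
Proof.
move=> gbij; apply: (@char_poly_reindex _ _ _ _
  (fun k => enum_rank (g (enum_val k)))).
- by move=> k l /enum_rank_inj /(bij_inj gbij) /enum_val_inj.
- by rewrite (bij_eq_card gbij).
- by move=> i j; rewrite !mxE !enum_rankK.
Qed.

Lemma char_poly_fun_mx_sum (I J : finType) (a : I + J -> I + J -> R) :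
  (forall j i, a (inr j) (inl i) = 0) ->
  char_poly (fun_mx a) = char_poly (fun_mx (fun x y => a (inl x) (inl y)))
                       * char_poly (fun_mx (fun x y => a (inr x) (inr y))).
Proof.
move=> a0.
pose f (k : 'I_(#|I| + #|J|)) : I + J :=
  match split k with inl i => inl (enum_val i) | inr j => inr (enum_val j) end.
pose g (x : I + J) : 'I_(#|I| + #|J|) :=
  match x with
  | inl i => lshift _ (enum_rank i)
  | inr j => rshift _ (enum_rank j)
  end.
have fK : cancel f g.
  move=> k; rewrite /f -{2}[k]splitK.
  by case: (split k) => i /=; rewrite enum_valK.
pose Aur : 'M[R]_(#|I|, #|J|) :=
  \matrix_(i, j) a (inl (enum_val i)) (inr (enum_val j)).
rewrite -(char_poly_ublock _ Aur); symmetry.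
apply: (@char_poly_reindex _ _ _ _ (fun k => enum_rank (f k))).
- by move=> k l /enum_rank_inj /(can_inj fK).
- by rewrite card_sum.
move=> i j; rewrite -[i]splitK -[j]splitK.
by case: (split i) => i'; case: (split j) => j';
  rewrite ?block_mxEul ?block_mxEur ?block_mxEdl ?block_mxEdr !mxE !enum_rankK
    /f ?(unsplitK (inl _)) ?(unsplitK (inr _)) ?a0.
Qed.

Lemma char_poly_fun_mx_diag (I : finType) (d : I -> R) :
  char_poly (fun_mx (fun x y => (x == y)%:R * d x)) = \prod_x ('X - (d x)%:P).
Proof.
rewrite char_poly_trig.
  rewrite [RHS]big_enum_val /=.
  by apply: eq_bigr => i _; rewrite !mxE eqxx mul1r.
apply/is_trig_mxP => i j lt_ji; rewrite !mxE (inj_eq enum_val_inj).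
by rewrite -val_eqE /= (ltn_eqF lt_ji) mul0r.
Qed.

End CharPoly.

Lemma big_flatten_nseq (R : Type) (idx : R) (op : Monoid.com_law idx)
    (T : finType) (S : Type) (k : nat) (f : T -> S) (F : S -> R) :
  \big[op/idx]_(y <- flatten [seq nseq k (f v) | v <- enum T]) F y
  = \big[op/idx]_(p : 'I_k * T) F (f p.2).
Proof.
rewrite big_flatten big_map big_enum /= -(pair_bigA _ (fun _ v => F (f v))) /=.
rewrite exchange_big /=.
by apply: eq_bigr => v _; rewrite big_nseq big_const_ord.
Qed.

Lemma char_poly_affine (F : fieldType) n (M : 'M[F]_n) (s : seq F) (c d : F) :
  c != 0 -> char_poly M = \prod_(q <- s) ('X - q%:P) ->
  char_poly (c *: M + d%:M) = \prod_(q <- s) ('X - (c * q + d)%:P).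
Proof.
move=> c0 cpM.
have size_s : size s = n.
  by have := size_char_poly M; rewrite cpM size_prod_XsubC => -[].
pose p := c^-1%:P * ('X - d%:P).
have cpc : c%:P * p = 'X - d%:P by rewrite mulrA -polyCM divff // mul1r.
rewrite /char_poly; have -> : char_poly_mx (c *: M + d%:M)
    = c%:P *: map_mx (comp_poly p) (char_poly_mx M).
  apply/matrixP => i j; rewrite !mxE; case: (i == j) => /=;
    rewrite ?mulr1n ?mulr0n ?comp_polyB ?comp_polyX ?comp_polyC ?comp_poly0
      ?polyCD ?polyCM ?mulrBr ?cpc ?raddf0 ?sub0r ?mulrN; ring.
rewrite detZ det_map_mx /= -/(char_poly M) cpM rmorph_prod /=.
rewrite -size_s -iter_mulr_1 -count_predT -big_const_seq -big_split /=.
apply: eq_bigr => q _; rewrite comp_polyB comp_polyX comp_polyC mulrBr cpc.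
rewrite polyCD polyCM; ring.
Qed.

Definition signless_laplacian_fun (R : nzRingType) (V : finType) (e : rel V)
    (x y : V) : R :=
  (x == y)%:R * (deg e x)%:R + (e x y)%:R.

Lemma signless_laplacianE (R : numDomainType) (V : finType) (e : rel V) :
  signless_laplacian R e = fun_mx (signless_laplacian_fun R e).
Proof.
apply/matrixP => i j; rewrite !mxE /signless_laplacian_fun; congr (_ + _).
case: eqP => [->|neq_ij]; first by rewrite eqxx mul1r.
by case: eqP => [/enum_val_inj//|_]; rewrite mul0r.
Qed.

Lemma natr_deg (R : nzRingType) (V : finType) (e : rel V) x :
  (deg e x)%:R = \sum_y (e x y)%:R :> R.
Proof.
rewrite /deg -sum1_card natr_sum big_mkcond /=.
by apply: eq_bigr => y _; rewrite inE; case: (e x y).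
Qed.

Section ComplementDegrees.
Variables (R : comNzRingType) (V : finType) (e : rel V).
Hypothesis e_irr : irreflexive e.

Lemma natr_compl_graph x y :
  (compl_graph e x y)%:R = (x != y)%:R - (e x y)%:R :> R.
Proof.
rewrite /compl_graph; case: (eqVneq x y) => [<-|_].
  by rewrite e_irr subrr.
by case: (e x y); rewrite ?subrr ?subr0.
Qed.

Lemma signless_laplacian_fun_compl x y :
  signless_laplacian_fun R (compl_graph e) x y
  = (x == y)%:R * (#|V|%:R - (deg e x)%:R - 2) + 1 - (e x y)%:R.
Proof.
have natr_deg_compl :
    (deg (compl_graph e) x)%:R = #|V|%:R - 1 - (deg e x)%:R :> R.
  rewrite !natr_deg; under eq_bigr do rewrite natr_compl_graph.
  by rewrite sumrB sumr_neq.
rewrite /signless_laplacian_fun natr_deg_compl natr_compl_graph.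
by case: (x == y); rewrite /= ?mul1r ?mul0r; ring.
Qed.

End ComplementDegrees.

Lemma blowup_irreflexive (V : finType) (e : rel V) t :
  irreflexive e -> irreflexive (@blowup V e t).
Proof. by move=> e_irr x; apply: e_irr. Qed.

Lemma natr_deg_blowup (R : nzRingType) (V : finType) (e : rel V) t x :
  (deg (@blowup V e t) x)%:R = t%:R * (deg e x.1)%:R :> R.
Proof.
rewrite !natr_deg -(pair_bigA _ (fun w (b : 'I_t) => (e x.1 w)%:R)) /=.
under eq_bigr do rewrite sumr_const card_ord.
by rewrite sumrMnl mulr_natl.
Qed.

Section ComplementBlowup.
Variables (R : numDomainType) (V : finType) (e : rel V) (k : nat).
Hypothesis e_irr : irreflexive e.
Local Notation t := k.+1.
Local Notation I := (V * 'I_t)%type.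
Local Notation o := (@ord0 k).
Local Notation Q := (signless_laplacian_fun R (compl_graph (@blowup V e t))).
Local Notation c v := (t%:R * #|V|%:R - t%:R * (deg e v)%:R - 2 : R).

Lemma signless_laplacian_fun_compl_blowup x y :
  Q x y = (x == y)%:R * c x.1 + 1 - (e x.1 y.1)%:R.
Proof.
rewrite signless_laplacian_fun_compl; last exact: blowup_irreflexive.
by rewrite (natr_deg_blowup R e x) card_prod card_ord natrM; ring.
Qed.

Lemma sum_fiber_signless_laplacian v a u :
  \sum_b Q (v, a) (u, b) = (v == u)%:R * c v + t%:R * (1 - (e v u)%:R).
Proof.
under eq_bigr do rewrite signless_laplacian_fun_compl_blowup /= xpair_eqE.
rewrite !big_split /= sumrN !sumr_const card_ord -mulr_suml.
have -> : \sum_(b : 'I_t) ((v == u) && (a == b))%:R = (v == u)%:R :> R.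
  case: (v == u) => /=; last by rewrite big1.
  rewrite (eq_bigr (fun b => (b == a)%:R * 1)) ?sumr_delta_l // => b _.
  by rewrite eq_sym mulr1.
by rewrite -mulr_natl; ring.
Qed.

Definition fiber_basis (z y : I) : R :=
  if y.2 == o then (z.1 == y.1)%:R else (z == y)%:R.

Definition fiber_basis_inv (x z : I) : R :=
  (z == x)%:R - (x.2 != o)%:R * (z == (x.1, o))%:R.

Lemma fiber_basis_invK x y :
  \sum_z fiber_basis_inv x z * fiber_basis z y = (x == y)%:R.
Proof.
under eq_bigr do rewrite /fiber_basis_inv mulrBl -mulrA.
rewrite sumrB sumr_delta_l -mulr_sumr sumr_delta_l.
case: x y => [v a] [w b]; rewrite /fiber_basis /= !xpair_eqE.
case: (eqVneq b o) => [->|_]; last by rewrite andbF mulr0 subr0.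
by case: (v == w); case: (a == o); rewrite /= ?mulr1 ?mulr0 ?subrr ?subr0.
Qed.

Local Notation QP z y := (\sum_w Q z w * fiber_basis w y).
Local Notation B x y := (\sum_z fiber_basis_inv x z * QP z y).

Lemma fiber_basis_inv_mulE x y :
  B x y = QP x y - (x.2 != o)%:R * QP (x.1, o) y.
Proof.
under eq_bigr do rewrite /fiber_basis_inv mulrBl -mulrA.
by rewrite sumrB sumr_delta_l -mulr_sumr sumr_delta_l.
Qed.

Lemma Q_fiber_basis_lift z w b : QP z (w, lift o b) = Q z (w, lift o b).
Proof. by rewrite /fiber_basis /= sumr_delta_r. Qed.

Lemma Q_fiber_basis_ord0 v a w :
  QP (v, a) (w, o) = (v == w)%:R * c v + t%:R * (1 - (e v w)%:R).
Proof.
rewrite /fiber_basis /= -(sum_fiber_signless_laplacian v a).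
rewrite -(pair_bigA _ (fun u b => Q (v, a) (u, b) * (u == w)%:R)) /=.
by under eq_bigr do rewrite -mulr_suml; rewrite sumr_delta_r.
Qed.

Lemma conj_fiber_basis_ord0 v w : B (v, o) (w, o)
  = t%:R * signless_laplacian_fun R (compl_graph e) v w
    + 2 * (t%:R - 1) * (v == w)%:R.
Proof.
rewrite fiber_basis_inv_mulE /= mul0r subr0 Q_fiber_basis_ord0.
rewrite signless_laplacian_fun_compl //.
by case: (v == w); rewrite /= ?mul1r ?mul0r ?mulr0; ring.
Qed.

Lemma conj_fiber_basis_lift_ord0 b v w : B (v, lift o b) (w, o) = 0.
Proof. by rewrite fiber_basis_inv_mulE /= mul1r !Q_fiber_basis_ord0 subrr. Qed.

Lemma conj_fiber_basis_lift b v b' w : B (v, lift o b) (w, lift o b')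
  = ((b, v) == (b', w))%:R * c v.
Proof.
rewrite fiber_basis_inv_mulE /= mul1r !Q_fiber_basis_lift.
rewrite !signless_laplacian_fun_compl_blowup /= !xpair_eqE (inj_eq lift_inj).
rewrite (negbTE (neq_lift _ _)) andbF andbC.
by rewrite mul0r add0r; ring.
Qed.

Definition fiber_index (x : V + 'I_k * V) : I :=
  match x with inl v => (v, o) | inr (b, v) => (v, lift o b) end.

Lemma fiber_index_bij : bijective fiber_index.
Proof.
exists (fun x => if unlift o x.2 is Some b then inr (b, x.1) else inl x.1).
  by case=> [v|[b v]]; rewrite /= ?unlift_none ?liftK.
by case=> v a /=; case: unliftP => [b ->|->].
Qed.

Lemma char_poly_compl_blowup :
  char_poly (signless_laplacian R (compl_graph (@blowup V e t)))
  = char_poly (t%:R *: signless_laplacian R (compl_graph e)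
               + (2 * (t%:R - 1))%:M)
    * \prod_(p : 'I_k * V) ('X - (c p.2)%:P).
Proof.
rewrite signless_laplacianE -(char_poly_fun_mx_conj _ fiber_basis_invK).
rewrite -(char_poly_fun_mx_bij _ fiber_index_bij).
rewrite char_poly_fun_mx_sum; last first.
  by move=> [b v] w; apply: conj_fiber_basis_lift_ord0.
rewrite -char_poly_fun_mx_diag; congr (_ * _); congr char_poly.
  apply/matrixP => i j; rewrite signless_laplacianE !mxE conj_fiber_basis_ord0.
  by rewrite mulr_natr (inj_eq enum_val_inj).
apply/matrixP => i j; rewrite !mxE.
case: (enum_val i) => b v; case: (enum_val j) => b' w.
exact: conj_fiber_basis_lift.
Qed.

End ComplementBlowup.

Theorem theorem10 (R : rcfType) (V : finType) (e : rel V) (t : nat)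
  (qbar : seq R) :
  (2 <= t)%N ->
  simple_graph e ->
  eigenvalues_multiset (signless_laplacian R (compl_graph e)) qbar ->
  eigenvalues_multiset (signless_laplacian R (compl_graph (@blowup V e t)))
    ([seq t%:R * q + 2 * (t%:R - 1) | q <- qbar] ++
     flatten [seq nseq t.-1 (t%:R * #|V|%:R - t%:R * (deg e v)%:R - 2)
             | v <- enum V]).
Proof.
case: t => [//|k] _ [_ e_irr] cp_compl.
rewrite /eigenvalues_multiset char_poly_compl_blowup // big_cat /= big_map.
rewrite big_flatten_nseq; congr (_ * _).
by apply: char_poly_affine; rewrite ?pnatr_eq0.
Qed.
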